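(* For every simple, undirected, connected graph $\Gamma$ with at least two vertices, there exists a triple Roman dominating function of $\Gamma$ of minimum weight $\gamma_{[3R]}(\Gamma)$ that assigns the value $1$ to no vertex.
   Context: For a graph $\Gamma=(V,E)$ and $h:V\to\{0,1,2,3,4\}$, let $AN(v)=\{w\in N(v):h(w)\ge 1\}$, $AN[v]=AN(v)\cup\{v\}$ and $h(S)=\sum_{u\in S}h(u)$. $h$ is a triple Roman dominating function (3RDF) if every $v$ with $h(v)<3$ satisfies $h(AN[v])\ge|AN(v)|+3$. The triple Roman domination number $\gamma_{[3R]}(\Gamma)$ is the minimum weight $h(V)$ of a 3RDF of $\Gamma$. *)

From mathcomp Require Import all_boot all_order.
Set Implicit Arguments. Unset Strict Implicit. Unset Printing Implicit Defensive.

Section TRD.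
Variables (T : finType) (e : rel T).

Definition simple_graph := symmetric e /\ irreflexive e.
Definition connected_graph := forall x y : T, connect e x y.

Definition AN (h : {ffun T -> 'I_5}) (v : T) : {set T} :=
  [set w | e v w & 1 <= h w].
Definition ANc (h : {ffun T -> 'I_5}) (v : T) : {set T} := v |: AN h v.

Definition hsum (h : {ffun T -> 'I_5}) (S : {set T}) : nat :=
  \sum_(u in S) (h u : nat).

Definition is_3RDF (h : {ffun T -> 'I_5}) : bool :=
  [forall v, (h v < 3) ==> (hsum h (ANc h v) >= #|AN h v| + 3)].

Definition weight (h : {ffun T -> 'I_5}) : nat := hsum h [set: T].

(* gamma_[3R] : minimum weight of a 3RDF (the constant-4 function is always
   a 3RDF, so the minimum below is over a nonempty set; 4 * #|T| is an
   upper bound used as the neutral element of minn). *)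
Definition gamma3R : nat :=
  \big[minn/(4 * #|T|)]_(h : {ffun T -> 'I_5} | is_3RDF h) weight h.

End TRD.

From mathcomp Require Import all_boot all_order.
From mathcomp Require Import zify.
Set Implicit Arguments. Unset Strict Implicit. Unset Printing Implicit Defensive.
Import Order.TTheory.

(* The condition of a 3RDF at v reads h(v) + sum_{u ~ v} (h(u) - 1)^+ >= 3.
   If h(v) = 1 this forces a neighbour w with h(w) >= 2; setting h(v) := 0
   and raising h(w) by one (capped at 4) keeps every condition, does not
   increase the weight and strictly decreases the number of vertices with
   label 1.  Iterating from a minimum 3RDF gives the theorem. *)

Section TripleRoman.
Variables (T : finType) (e : rel T).

Implicit Types (h : {ffun T -> 'I_5}) (u v w : T).

(* Truncated predecessor: neighbours labelled 0, i.e. outside AN h v,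
   contribute nothing. *)
Definition excess h v : nat := \sum_(u | e v u) (h u).-1.

Definition ones h : {set T} := [set u | (h u : nat) == 1].

Lemma weight_le4 h : weight h <= 4 * #|T|.
Proof.
rewrite /weight /hsum -cardsT mulnC -sum_nat_const.
by apply: leq_sum => u _; rewrite -ltnS ltn_ord.
Qed.

Lemma gamma3R_le h : is_3RDF e h -> gamma3R e <= weight h.
Proof.
by move=> Hh; rewrite /gamma3R -minEnat; have := bigmin_le_cond (4 * #|T|) (@weight T) Hh.
Qed.

Lemma gamma3R_attained : exists2 h, is_3RDF e h & weight h = gamma3R e.
Proof.
pose h4 := [ffun _ : T => (ord_max : 'I_5)].
have H4 : is_3RDF e h4 by apply/forallP => v; rewrite ffunE.
rewrite /gamma3R -minEnat.
have [h Hh ->] :=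
  eq_bigmin h4 (is_3RDF e) (@weight T) H4 (fun h _ => weight_le4 h).
by exists h.
Qed.

Hypothesis irr_e : irreflexive e.

Lemma hsum_ANc h v : hsum h (ANc e h v) = h v + excess h v + #|AN e h v|.
Proof.
rewrite /hsum /ANc big_setU1 /=; last by rewrite inE irr_e.
rewrite -addnA; congr (_ + _).
transitivity (\sum_(u in AN e h v) ((h u).-1 + 1)).
  by apply: eq_bigr => u; rewrite inE => /andP[_ hu]; rewrite addn1 prednK.
rewrite big_split /= sum1_card; congr (_ + _).
rewrite /excess big_mkcond [RHS]big_mkcond /=; apply: eq_bigr => u _.
by rewrite inE; case: (e v u) => //=; case: (h u) => -[|k].
Qed.

Lemma is_3RDFE h : is_3RDF e h = [forall v, 3 <= h v + excess h v].
Proof.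
apply: eq_forallb => v /=; rewrite hsum_ANc [_ + #|_|]addnC leq_add2l.
by case: ltnP => //= h3; apply/esym; exact: leq_trans h3 (leq_addr _ _).
Qed.

Lemma is_3RDF_one_nbr h v : is_3RDF e h -> (h v : nat) = 1 ->
  exists2 w, e v w & 2 <= h w.
Proof.
rewrite is_3RDFE => /forallP /(_ v) + hv1; rewrite hv1.
have [w /andP[evw hw2] _|no_w] := pickP (fun w => e v w && (2 <= h w)).
  by exists w.
rewrite /excess big1 // => u evu.
by have := no_w u; rewrite evu /=; case: (h u) => -[|[|k]].
Qed.

Definition move_one h v w : {ffun T -> 'I_5} :=
  [ffun u => if u == v then ord0
             else if u == w then inord (minn (h w).+1 4) else h u].

Section MoveOne.
Variables (h : {ffun T -> 'I_5}) (v w : T).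
Hypotheses (hv1 : (h v : nat) = 1) (evw : e v w) (hw2 : 2 <= h w).

Local Notation g := (move_one h v w).

Let wNv : w != v.
Proof. by apply: contraTneq evw => ->; rewrite irr_e. Qed.

Let g_v : (g v : nat) = 0.
Proof. by rewrite ffunE eqxx. Qed.

Let g_w : (g w : nat) = minn (h w).+1 4.
Proof. by rewrite ffunE (negbTE wNv) eqxx inordK // ltnS geq_minr. Qed.

Let g_other u : u != v -> u != w -> g u = h u.
Proof. by move=> /negbTE uNv /negbTE uNw; rewrite ffunE uNv uNw. Qed.

Let le_move u : u != v -> (h u : nat) <= g u.
Proof.
move=> uNv; have [->|uNw] := eqVneq u w.
  by rewrite g_w leq_min leqnSn -ltnS ltn_ord.
by rewrite g_other.
Qed.

Let le_excess_move u : excess h u <= excess g u.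
Proof.
apply: leq_sum => x _; have [->|xNv] := eqVneq x v; first by rewrite hv1.
by have := le_move xNv; lia.
Qed.

Lemma is_3RDF_move_one : is_3RDF e h -> is_3RDF e g.
Proof.
rewrite !is_3RDFE => /forallP h3; apply/forallP => x.
have [->|xNv] := eqVneq x v; last first.
  by have := h3 x; have := le_move xNv; have := le_excess_move x; lia.
have excessE f : excess f v =
    (f w).-1 + \sum_(u | e v u && (u != w)) (f u).-1 by rewrite /excess (bigD1 w).
have le_rest : \sum_(u | e v u && (u != w)) (h u).-1 <=
               \sum_(u | e v u && (u != w)) (g u).-1.
  by apply: leq_sum => u /andP[_ uNw]; have [->|uNv] := eqVneq u v;
    [rewrite hv1 | rewrite g_other].
by have := h3 v; rewrite g_v !excessE hv1 g_w; lia.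
Qed.

Lemma weight_move_one : weight g <= weight h.
Proof.
have weightE f : weight f = f v + f w + \sum_(u | (u != v) && (u != w)) (f u : nat).
  rewrite /weight /hsum (bigD1 v) //= (bigD1 w) ?inE //= addnA; congr (_ + _).
  by apply: eq_bigl => u; rewrite in_setT.
rewrite !weightE (eq_bigr (fun u => h u : nat)) => [|u /andP[uNv uNw]].
  by rewrite g_v g_w hv1 leq_add2r; lia.
by rewrite g_other.
Qed.

Lemma ones_move_one : ones g \proper ones h.
Proof.
apply/properP; split; last by exists v; rewrite !inE ?hv1 ?g_v.
apply/subsetP => u; rewrite !inE; have [->|uNv] := eqVneq u v; first by rewrite g_v.
have [->|uNw] := eqVneq u w; first by rewrite g_w => /eqP; lia.
by rewrite g_other.
Qed.

End MoveOne.

Lemma is_3RDF_without_ones h : is_3RDF e h ->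
  exists h' : {ffun T -> 'I_5},
    [/\ is_3RDF e h', weight h' <= weight h & forall v, (h' v : nat) != 1].
Proof.
have [n] := ubnP #|ones h|; elim: n h => // n IH h; rewrite ltnS => lt_n h3.
have [v /eqP hv1|no1] := pickP (fun v => (h v : nat) == 1); last first.
  by exists h; split=> // v; rewrite no1.
have [w evw hw2] := is_3RDF_one_nbr h3 hv1.
have [|h' [h'3 le_h' no1]] := IH _ _ (is_3RDF_move_one hv1 evw hw2 h3).
  exact: leq_trans (proper_card (ones_move_one hv1 evw hw2)) _.
by exists h'; split=> //; exact: leq_trans (weight_move_one hv1 evw hw2).
Qed.

End TripleRoman.

Theorem proposition17 (T : finType) (e : rel T) :
  simple_graph e -> connected_graph e -> 2 <= #|T| ->
  exists h : {ffun T -> 'I_5},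
    [/\ is_3RDF e h, weight h = gamma3R e & forall v : T, (h v : nat) != 1].
Proof.
move=> [_ irr_e] _ _.
have [h0 h0_3 h0_min] := gamma3R_attained e.
have [h [h3 le_h no1]] := is_3RDF_without_ones irr_e h0_3.
exists h; split=> //.
by apply/eqP; rewrite eqn_leq -{1}h0_min le_h gamma3R_le.
Qed.
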